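(* For every $n\ge 3$ there does not exist any $\mathrm{SL}_2$-tiling of $\mathbb{Z}^n$.
   Context: Write $\mathbf{e}_k$ for the $k$-th standard unit vector of $\mathbb{Z}^n$. An $\mathrm{SL}_2$-tiling of $\mathbb{Z}^n$ is an array $(a_{\mathbf{i}})_{\mathbf{i}\in\mathbb{Z}^n}$ with all $a_{\mathbf{i}}\in\mathbb{Z}_{>0}$ such that for all $\mathbf{i}\in\mathbb{Z}^n$ and all $k\ne\ell$: $a_{\mathbf{i}+\mathbf{e}_\ell}a_{\mathbf{i}+\mathbf{e}_k}-a_{\mathbf{i}}a_{\mathbf{i}+\mathbf{e}_k+\mathbf{e}_\ell}=1$. *)

From HB Require Import structures.
From mathcomp Require Import all_boot all_order all_algebra.
Set Implicit Arguments. Unset Strict Implicit. Unset Printing Implicit Defensive.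
Import Order.TTheory GRing.Theory Num.Theory.
Local Open Scope ring_scope.

Definition e_ (n : nat) (k : 'I_n) : 'rV[int]_n := delta_mx 0 k.

Definition SL2_tiling (n : nat) (a : 'rV[int]_n -> int) : Prop :=
  (forall i, 0 < a i) /\
  (forall (i : 'rV[int]_n) (k l : 'I_n), k != l ->
     a (i + e_ l) * a (i + e_ k) - a i * a (i + e_ k + e_ l) = 1).

From HB Require Import structures.
From mathcomp Require Import all_boot all_order all_algebra.
From mathcomp Require Import zify ring.
Import Order.TTheory GRing.Theory Num.Theory.

Local Open Scope ring_scope.

(* In a 3-dimensional cube of a tiling, five of the six face relations force
   the two vertices adjacent to the base vertex along directions k and l to
   carry the same value.  Hence, when n >= 3, all neighbours of a point along
   positive directions agree, and the face relation at j - e_k then reads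
   a(j)^2 = 1 + a(j - e_k) a(j + e_l): one of these two positive values is
   smaller than a(j).  This gives an infinite descent in the positive
   integers. *)

(* The variables are the values at the vertices of the cube spanned by
   directions k, l, m at a base point; only the faces through the base point
   and the two faces through its k- and l-neighbours are used. *)
Lemma SL2_cube_neighbors_eq (a0 ak al am akl akm alm aklm : int) :
  0 < a0 -> 0 < ak -> 0 < al ->
  al * ak - a0 * akl = 1 ->
  am * ak - a0 * akm = 1 ->
  am * al - a0 * alm = 1 ->
  akm * akl - ak * aklm = 1 ->
  alm * akl - al * aklm = 1 ->
  ak = al.
Proof.
move=> a0_gt0 ak_gt0 al_gt0 fkl fkm flm fk fl.
have y_k : a0 ^+ 2 * (ak * aklm + 1) = (ak * al - 1) * (ak * am - 1).
  have -> : ak * al - 1 = a0 * akl by lia.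
  have -> : ak * am - 1 = a0 * akm by lia.
  have -> : ak * aklm + 1 = akm * akl by lia.
  ring.
have y_l : a0 ^+ 2 * (al * aklm + 1) = (ak * al - 1) * (al * am - 1).
  have -> : ak * al - 1 = a0 * akl by lia.
  have -> : al * am - 1 = a0 * alm by lia.
  have -> : al * aklm + 1 = alm * akl by lia.
  ring.
have prod_eq0 : (ak - al) * (ak * al - 1 + a0 ^+ 2) = 0.
  have -> : (ak - al) * (ak * al - 1 + a0 ^+ 2) =
      al * ((ak * al - 1) * (ak * am - 1)) - ak * ((ak * al - 1) * (al * am - 1))
    - (al * (a0 ^+ 2 * (ak * aklm + 1)) - ak * (a0 ^+ 2 * (al * aklm + 1))) by ring.
  by rewrite y_k y_l subrr.
have : ak * al - 1 + a0 ^+ 2 != 0 by rewrite expr2; lia.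
by move: prod_eq0 => /eqP; rewrite mulf_eq0 subr_eq0 => /orP [/eqP|/eqP ->].
Qed.

Lemma nonneg_descent_absurd (T : Type) (f : T -> int) (x : T) :
  (forall y, 0 <= f y) -> ~ (forall y, exists z, f z < f y).
Proof.
move=> f_ge0 descent.
suff bounded : forall N : nat, forall y, f y <= N%:Z -> False.
  by apply: (bounded (absz (f x)) x); have := f_ge0 x; lia.
elim=> [|N IHN] y fy; have [z fz] := descent y; first by have := f_ge0 z; lia.
by apply: (IHN z); lia.
Qed.

Section Tiling.

Variables (n : nat) (a : 'rV[int]_n -> int).
Hypothesis tiling : SL2_tiling a.

Lemma SL2_tiling_neighbors_eq (i : 'rV[int]_n) (k l m : 'I_n) :
  k != l -> k != m -> l != m -> a (i + e_ k) = a (i + e_ l).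
Proof.
case: tiling => a_gt0 face kl km lm.
have fk := face (i + e_ k) l m lm.
have fl := face (i + e_ l) k m km.
rewrite [i + e_ l + e_ k]addrAC in fl.
exact: SL2_cube_neighbors_eq (a_gt0 i) (a_gt0 _) (a_gt0 _)
  (face i k l kl) (face i k m km) (face i l m lm) fk fl.
Qed.

Lemma SL2_tiling_descent (k l m : 'I_n) :
  k != l -> k != m -> l != m -> forall j, exists j', a j' < a j.
Proof.
move=> kl km lm j.
case: tiling => a_gt0 face.
have := face (j - e_ k) k l kl.
rewrite -(SL2_tiling_neighbors_eq _ _ _ _ kl km lm) subrK => square.
case: (ltP (a (j - e_ k)) (a j)) => [lt_k|ge_k]; first by exists (j - e_ k).
case: (ltP (a (j + e_ l)) (a j)) => [lt_l|ge_l]; first by exists (j + e_ l).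
have := a_gt0 j; nia.
Qed.

End Tiling.

Theorem proposition2p4 (n : nat) : (3 <= n)%N ->
  ~ exists a : 'rV[int]_n -> int, SL2_tiling a.
Proof.
move=> n_ge3 [a tiling].
pose k : 'I_n := Ordinal (leq_trans (isT : 1 <= 3)%N n_ge3).
pose l : 'I_n := Ordinal (leq_trans (isT : 2 <= 3)%N n_ge3).
pose m : 'I_n := Ordinal n_ge3.
apply: (@nonneg_descent_absurd _ a 0) => [j|].
  by have := tiling.1 j; lia.
exact: (@SL2_tiling_descent _ _ tiling k l m).
Qed.
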